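(* Let $S$ be a finite inverse monoid with underlying groupoid $G$, and let $\beta\colon S\to\mathsf{K}(G)$ be the map $\beta(a)=a^{\downarrow}=\{x\in S: x\le a\}$. Let $\alpha\colon S\to T$ be any monoid homomorphism to a Boolean inverse monoid $T$. Then there is a unique morphism of Boolean inverse monoids $\gamma\colon \mathsf{K}(G)\to T$ such that $\gamma\beta=\alpha$.
   Context: An inverse semigroup is a semigroup in which each $s$ has a unique $s^{-1}$ with $s=ss^{-1}s$, $s^{-1}=s^{-1}ss^{-1}$; natural partial order $s\le t$ iff $s=ts^{-1}s$. The underlying groupoid $G$ of $S$ is $S$ with the restricted product $s\cdot t=st$, defined exactly when $s^{-1}s=tt^{-1}$; its identities are the idempotents of $S$, with $\mathbf{d}(s)=s^{-1}s$, $\mathbf{r}(s)=ss^{-1}$. For a groupoid $G$, a local bisection is a subset $A$ with $AA^{-1}$ and $A^{-1}A$ consisting only of identities, where $AB=\{ab:a\in A,b\in B,\mathbf{d}(a)=\mathbf{r}(b)\}$; $\mathsf{K}(G)$ is the inverse monoid of local bisections under this multiplication (it is a Boolean inverse monoid, and $a^{\downarrow}$ is a local bisection). Elements $a,b$ are compatible if $a^{-1}b,ab^{-1}$ are idempotents. A Boolean inverse monoid is an inverse monoid with zero in which finite compatible subsets have joins with respect to $\le$, multiplication distributes over them, and the idempotents form a Boolean algebra. A morphism of Boolean inverse monoids is a monoid homomorphism preserving zero and binary (compatible) joins. *)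

From Stdlib Require List.
From mathcomp Require Import all_boot.
Set Implicit Arguments. Unset Strict Implicit. Unset Printing Implicit Defensive.

Section Generic.
Variables (X : Type) (mul : X -> X -> X) (inv : X -> X).

Definition idem (e : X) : Prop := mul e e = e.

Definition nle (s t : X) : Prop := s = mul t (mul (inv s) s).

Definition compatible (a b : X) : Prop :=
  idem (mul (inv a) b) /\ idem (mul a (inv b)).

Definition pairwise_compatible (xs : list X) : Prop :=
  forall x y, List.In x xs -> List.In y xs -> compatible x y.

Definition is_join (xs : list X) (j : X) : Prop :=
  (forall x, List.In x xs -> nle x j) /\
  (forall u, (forall x, List.In x xs -> nle x u) -> nle j u).

Definition inverse_semigroup_axioms : Prop :=
  (forall a b c, mul a (mul b c) = mul (mul a b) c) /\
  (forall s, s = mul s (mul (inv s) s) /\ inv s = mul (inv s) (mul s (inv s))) /\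
  (forall s t, s = mul s (mul t s) -> t = mul t (mul s t) -> t = inv s).

Definition inverse_monoid (one : X) : Prop :=
  inverse_semigroup_axioms /\ (forall x, mul one x = x /\ mul x one = x).

Definition is_glbE (e f m : X) : Prop :=
  idem m /\ nle m e /\ nle m f /\
  (forall z, idem z -> nle z e -> nle z f -> nle z m).
Definition is_lubE (e f j : X) : Prop :=
  idem j /\ nle e j /\ nle f j /\
  (forall z, idem z -> nle e z -> nle f z -> nle j z).

Definition idempotents_boolean_algebra : Prop :=
  (exists b, idem b /\ forall e, idem e -> nle b e) /\
  (exists t, idem t /\ forall e, idem e -> nle e t) /\
  (forall e f, idem e -> idem f -> exists m, is_glbE e f m) /\
  (forall e f, idem e -> idem f -> exists j, is_lubE e f j) /\
  (forall e f g fg efg ef eg r, idem e -> idem f -> idem g ->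
     is_lubE f g fg -> is_glbE e fg efg -> is_glbE e f ef -> is_glbE e g eg ->
     is_lubE ef eg r -> efg = r) /\
  (forall e, idem e -> exists c m j, idem c /\ is_glbE e c m /\ is_lubE e c j /\
     (forall z, idem z -> nle m z) /\ (forall z, idem z -> nle z j)).

Definition boolean_inverse_monoid (one zero : X) : Prop :=
  inverse_monoid one /\
  (forall x, mul zero x = zero /\ mul x zero = zero) /\
  (forall xs, pairwise_compatible xs -> exists j, is_join xs j) /\
  (forall xs j a, pairwise_compatible xs -> is_join xs j ->
     is_join (List.map (mul a) xs) (mul a j) /\
     is_join (List.map (fun x => mul x a) xs) (mul j a)) /\
  idempotents_boolean_algebra.

End Generic.

Definition monoid_hom (X Y : Type) (mulX : X -> X -> X) (oneX : X)
  (mulY : Y -> Y -> Y) (oneY : Y) (f : X -> Y) : Prop :=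
  (forall a b, f (mulX a b) = mulY (f a) (f b)) /\ f oneX = oneY.

Definition bim_morphism (X Y : Type)
  (mulX : X -> X -> X) (oneX zeroX : X) (invX : X -> X)
  (mulY : Y -> Y -> Y) (oneY zeroY : Y) (invY : Y -> Y) (f : X -> Y) : Prop :=
  monoid_hom mulX oneX mulY oneY f /\ f zeroX = zeroY /\
  (forall a b j, compatible mulX invX a b -> is_join mulX invX [:: a; b] j ->
     is_join mulY invY [:: f a; f b] (f j)).

Section Groupoid.
Variables (S : finType) (mulS : S -> S -> S) (invS : S -> S).

Definition gdom (s : S) : S := mulS (invS s) s.
Definition gran (s : S) : S := mulS s (invS s).
Definition composable (s t : S) : bool := gdom s == gran t.

Definition identities : {set S} := [set e | mulS e e == e].

Definition gset_mul (A B : {set S}) : {set S} :=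
  [set mulS a b | a in A, b in B & composable a b].
Definition gset_inv (A : {set S}) : {set S} := invS @: A.

Definition is_local_bisection (A : {set S}) : bool :=
  (gset_mul A (gset_inv A) \subset identities) &&
  (gset_mul (gset_inv A) A \subset identities).

Definition KG := {A : {set S} | is_local_bisection A}.

Lemma set0_local_bisection : is_local_bisection set0.
Proof.
apply/andP; split; apply/subsetP => x /imset2P [a b];
  rewrite ?inE //=; move=> _ /imsetP [y]; rewrite inE.
Qed.

Definition Kzero : KG := exist _ set0 set0_local_bisection.
(* the product of two local bisections is a local bisection; insubd is only
   used to land in the subtype (the default is never needed) *)
Definition Kmul (A B : KG) : KG := insubd Kzero (gset_mul (val A) (val B)).
Definition Kinv (A : KG) : KG := insubd Kzero (gset_inv (val A)).
Definition Kone : KG := insubd Kzero identities.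

Definition downset (a : S) : {set S} := [set x | x == mulS a (mulS (invS x) x)].
Definition beta (a : S) : KG := insubd Kzero (downset a).

End Groupoid.

From Pilot Require Import Defs.
From mathcomp Require Import all_boot.
From Stdlib Require Import ClassicalEpsilon.
Set Implicit Arguments. Unset Strict Implicit. Unset Printing Implicit Defensive.

(* For an idempotent e of S let nu e be the join in T of the alpha f over the idempotents
   f < e, and pi e the complement of nu e in alpha e.  The pi e are pairwise orthogonal,
   alpha e is the join of the pi f over f <= e, and alpha y pi (d y) = pi (r y) alpha y.
   Hence the elements alpha x pi (d x) multiply like the arrows x of the groupoid (with
   product 0 when x y is undefined) and are pairwise compatible along a local bisection A;
   gamma A is their join.  Conversely, a morphism agreeing with alpha on the a^down is
   determined by its values on singletons: e^down is the disjoint union of {e} and the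
   idempotents below e, which forces {e} to go to pi e, and {x} = x^down {d x}. *)

(* [assoc_rw mA h] rewrites with [h : x1 * .. * xk = z] (or [h : idem _ e]) inside any
   left-nested product, after normalising with the associativity law [mA]. *)
Ltac assoc_rw mA h :=
  let h1 := fresh "h" in let h2 := fresh "h" in
  have h1 := h; rewrite ?/idem ?mA in h1;
  lazymatch type of h1 with
  | ?m _ _ = _ =>
      have h2 := fun a => ltac:(have h3 := congr1 (m a) h1; rewrite ?mA in h3; exact: h3)
  end;
  rewrite ?mA; repeat (first [rewrite h2 | rewrite h1]; rewrite ?mA);
  clear h1 h2.

Section InverseSemigroup.
Variables (X : Type) (mul : X -> X -> X) (inv : X -> X).
Hypothesis HX : inverse_semigroup_axioms mul inv.
Local Infix "•" := mul (at level 40, left associativity).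
Local Notation idem := (idem mul).
Local Notation nle := (nle mul inv).

Lemma mulA a b c : a • (b • c) = a • b • c.
Proof. by case: HX => h _; apply: h. Qed.

Local Ltac arw := assoc_rw mulA.

Lemma mul_inv_mul s : s • inv s • s = s.
Proof. by case: HX => _ [h _]; rewrite -mulA; case: (h s) => <-. Qed.

Lemma inv_mul_inv s : inv s • s • inv s = inv s.
Proof. by case: HX => _ [h _]; rewrite -mulA; case: (h s) => _ <-. Qed.

Lemma inv_uniq s t : s • t • s = s -> t • s • t = t -> t = inv s.
Proof. by case: HX => _ [_ h] h1 h2; apply: h; rewrite mulA. Qed.

Lemma invK s : inv (inv s) = s.
Proof. by symmetry; apply: inv_uniq; [exact: inv_mul_inv | exact: mul_inv_mul]. Qed.

Lemma idem_inv e : idem e -> inv e = e.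
Proof. by move=> he; symmetry; apply: inv_uniq; rewrite !he. Qed.

(* The inverse [b] of [e f] satisfies [b = f b e] and is idempotent, so [e f = inv b = b]. *)
Lemma idem_mul e f : idem e -> idem f -> idem (e • f).
Proof.
move=> he hf; set b := inv (e • f).
have hb : f • b • e = b.
  apply: inv_uniq; rewrite /b.
  - by arw hf; arw he; arw (mul_inv_mul (e • f)).
  - by arw he; arw hf; arw (inv_mul_inv (e • f)).
have idem_b : idem b.
  rewrite /idem -{1 2}hb /b; arw (inv_mul_inv (e • f)).
  by rewrite -/b hb.
have -> : e • f = inv b.
  by apply: inv_uniq; rewrite /b; [arw (inv_mul_inv (e • f)) | arw (mul_inv_mul (e • f))].
by rewrite idem_inv.
Qed.

Lemma idem_comm e f : idem e -> idem f -> e • f = f • e.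
Proof.
move=> he hf; have hef := idem_mul he hf; have hfe := idem_mul hf he.
have -> : f • e = inv (e • f).
  by apply: inv_uniq; [arw hf; arw he; arw hef | arw he; arw hf; arw hfe].
by rewrite idem_inv.
Qed.

Lemma idem_dom s : idem (inv s • s).
Proof. by rewrite /idem; arw (inv_mul_inv s). Qed.

Lemma idem_ran s : idem (s • inv s).
Proof. by rewrite /idem; arw (mul_inv_mul s). Qed.

Lemma invM s t : inv (s • t) = inv t • inv s.
Proof.
symmetry; apply: inv_uniq.
- arw (idem_comm (idem_ran t) (idem_dom s)).
  by arw (mul_inv_mul s); arw (mul_inv_mul t).
- arw (idem_comm (idem_dom s) (idem_ran t)).
  by arw (inv_mul_inv s); arw (inv_mul_inv t).
Qed.

Lemma idem_conj u e : idem e -> idem (inv u • e • u).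
Proof.
move=> he; rewrite /idem.
by arw (idem_comm (idem_ran u) he); arw he; arw (mul_inv_mul u).
Qed.

Lemma nleP s t : nle s t <-> exists2 e, idem e & s = t • e.
Proof.
split=> [h|[e he ->]]; first by exists (inv s • s); [exact: idem_dom | ].
rewrite /nle invM (idem_inv he).
by arw (esym (idem_comm (idem_dom t) he)); arw (mul_inv_mul t); arw he.
Qed.

Lemma nle_leftP s t : nle s t <-> exists2 f, idem f & s = f • t.
Proof.
rewrite nleP; split=> -[e he ->].
- exists (t • e • inv t); rewrite /idem; have hc := idem_comm (idem_dom t) he.
  + by arw hc; arw he; arw (inv_mul_inv t).
  + by arw (esym hc); arw (mul_inv_mul t).
- exists (inv t • e • t); first exact: idem_conj.
  by arw (idem_comm (idem_ran t) he); arw (mul_inv_mul t).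
Qed.

Lemma nle_refl s : nle s s.
Proof. by rewrite /nle mulA mul_inv_mul. Qed.

Lemma nle_trans s t u : nle s t -> nle t u -> nle s u.
Proof.
move=> /nleP [e he ->] /nleP [f hf ->]; apply/nleP.
by exists (f • e); [exact: idem_mul | rewrite mulA].
Qed.

Lemma nle_dom s t : nle s t -> inv s • s = inv t • t • (inv s • s).
Proof.
move=> /nleP [e he ->]; rewrite invM (idem_inv he).
have hd := idem_dom t; have hc := idem_comm hd he.
have -> : e • inv t • (t • e) = inv t • t • e by rewrite mulA -(mulA e) -hc -mulA he.
by rewrite [in RHS]mulA hd.
Qed.

Lemma nle_antisym s t : nle s t -> nle t s -> s = t.
Proof.
move=> hst hts.
have : inv s • s = inv t • t.
  by rewrite (nle_dom hst) -(idem_comm (idem_dom s) (idem_dom t)) -(nle_dom hts).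
by move=> e; rewrite hst e mulA mul_inv_mul.
Qed.

Lemma nle_idem e f : idem f -> nle e f -> idem e.
Proof. by move=> hf /nleP [g hg ->]; exact: idem_mul. Qed.

Lemma nle_idemE e f : idem e -> idem f -> nle e f <-> e = f • e.
Proof.
move=> he hf; split=> [h|h]; first by rewrite {1}h (idem_inv he) he.
by apply/nleP; exists e.
Qed.

Lemma idem_compatible e f : idem e -> idem f -> compatible mul inv e f.
Proof.
by move=> he hf; rewrite /compatible (idem_inv he) (idem_inv hf); split; exact: idem_mul.
Qed.

End InverseSemigroup.

Lemma In_mem (T : eqType) (x : T) (s : seq T) : List.In x s <-> x \in s.
Proof.
elim: s => //= y s IH; rewrite in_cons.
split=> [[->|/IH ->]|/orP [/eqP ->|/IH]]; rewrite ?eqxx ?orbT; auto.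
Qed.

Lemma bim_inverse_semigroup (X : Type) (mul : X -> X -> X) (inv : X -> X) (one zero : X) :
  boolean_inverse_monoid mul inv one zero -> inverse_semigroup_axioms mul inv.
Proof. by case=> [[]]. Qed.

Lemma in_map_enumP (T : finType) (U : Type) (f : T -> U) (A : {set T}) y :
  List.In y (List.map f (enum A)) <-> exists2 x, x \in A & y = f x.
Proof.
rewrite List.in_map_iff; split=> [[x [<- /In_mem]] | [x hx ->]].
  by rewrite mem_enum; exists x.
by exists x; split=> //; apply/In_mem; rewrite mem_enum.
Qed.

Lemma in_concat_map_enumP (T : finType) (U : Type) (F : T -> list U) (A : {set T}) z :
  List.In z (List.concat (List.map F (enum A))) <-> exists2 x, x \in A & List.In z (F x).
Proof.
rewrite List.in_concat; split=> [[_ [/in_map_enumP [x hx ->] hz]] | [x hx hz]]; first by exists x.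
by exists (F x); split=> //; apply/in_map_enumP; exists x.
Qed.

Section BooleanInverseMonoid.
Variables (X : Type) (mul : X -> X -> X) (inv : X -> X) (one zero : X).
Hypothesis HB : boolean_inverse_monoid mul inv one zero.
Local Infix "•" := mul (at level 40, left associativity).
Local Notation idem := (idem mul).
Local Notation nle := (nle mul inv).
Local Notation is_join := (is_join mul inv).
Local Notation pairwise_compatible := (pairwise_compatible mul inv).

Local Notation HX := (bim_inverse_semigroup HB).
Local Notation mA := (mulA HX).

Lemma mul1x x : one • x = x.
Proof. by case: HB => [[_ h] _]; case: (h x). Qed.

Lemma mulx1 x : x • one = x.
Proof. by case: HB => [[_ h] _]; case: (h x). Qed.

Lemma mul0x x : zero • x = zero.
Proof. by case: HB => [_ [h _]]; case: (h x). Qed.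

Lemma mulx0 x : x • zero = zero.
Proof. by case: HB => [_ [h _]]; case: (h x). Qed.

Lemma idem0 : idem zero.
Proof. exact: mul0x. Qed.

Lemma idem1 : idem one.
Proof. exact: mul1x. Qed.

Lemma nle0x x : nle zero x.
Proof. by rewrite /nle (idem_inv HX idem0) !mulx0. Qed.

Lemma nlex0 x : nle x zero -> x = zero.
Proof. by rewrite /nle mul0x. Qed.

Lemma idem_nle1 e : idem e -> nle e one.
Proof. by move=> he; apply/(nle_idemE HX he idem1); rewrite mul1x. Qed.

Lemma joinP xs j : is_join xs j <-> forall u, nle j u <-> forall x, List.In x xs -> nle x u.
Proof.
split=> [[ub least] u|h].
  by split=> [hju x /ub hx|]; [exact: (nle_trans HX hx hju) | exact: least].
by split=> [|u /h //]; apply/h; exact: (nle_refl HX).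
Qed.

Lemma join_ub xs j x : is_join xs j -> List.In x xs -> nle x j.
Proof. by case=> + _; apply. Qed.

Lemma join_least xs j u : is_join xs j -> (forall x, List.In x xs -> nle x u) -> nle j u.
Proof. by case=> _; apply. Qed.

Lemma join_uniq xs j j' : is_join xs j -> is_join xs j' -> j = j'.
Proof.
move=> [ub least] [ub' least'].
by apply: (nle_antisym HX); [exact: least | exact: least'].
Qed.

Lemma eq_join0 xs ys j :
  (forall x, List.In x xs -> x = zero \/ List.In x ys) ->
  (forall y, List.In y ys -> y = zero \/ List.In y xs) ->
  is_join xs j -> is_join ys j.
Proof.
move=> xs_ys ys_xs /joinP h; apply/joinP => u; rewrite h.
split=> hu x hx.
- by case: (ys_xs x hx) => [->|]; [exact: nle0x | exact: hu].
- by case: (xs_ys x hx) => [->|]; [exact: nle0x | exact: hu].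
Qed.

Lemma eq_join xs ys j : (forall x, List.In x xs <-> List.In x ys) -> is_join xs j -> is_join ys j.
Proof. by move=> h; apply: eq_join0 => x /h; right. Qed.

Lemma join_nil : is_join [::] zero.
Proof. by apply/joinP => u; split=> // _; exact: nle0x. Qed.

Lemma join1 x : is_join [:: x] x.
Proof. by apply/joinP => u; split=> [h y [<-|[]] | h] //; apply: h; left. Qed.

Lemma join_cons x xs j k : is_join xs j -> is_join [:: x; j] k <-> is_join (x :: xs) k.
Proof.
move=> /joinP hj.
have E u : (forall y, List.In y [:: x; j] -> nle y u) <->
           (forall y, List.In y (x :: xs) -> nle y u).
  split=> hu y /=.
  - by case=> [<-|hy]; [apply: hu; left | apply: (hj u).1 y hy; apply: hu; right; left].
  - by case=> [<-|[<-|[]]]; [apply: hu; left | apply/hj => z hz; apply: hu; right].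
by rewrite !joinP; split=> h u; rewrite h E.
Qed.

Lemma join_concat (I : Type) (l : list I) (f : I -> list X) (g : I -> X) j :
  (forall i, List.In i l -> is_join (f i) (g i)) ->
  is_join (List.map g l) j <-> is_join (List.concat (List.map f l)) j.
Proof.
move=> hfg; rewrite !joinP.
have E u : (forall x, List.In x (List.map g l) -> nle x u) <->
           (forall x, List.In x (List.concat (List.map f l)) -> nle x u).
  split=> hu x.
  - case/List.in_concat => _ [/List.in_map_iff [i [<- hi]] hx].
    have /joinP hgi := hfg i hi; apply: (hgi u).1 x hx.
    by apply: hu; apply/List.in_map_iff; exists i.
  - case/List.in_map_iff => i [<- hi]; have /joinP hgi := hfg i hi.
    apply/hgi => y hy; apply: hu; apply/List.in_concat.
    by exists (f i); split => //; apply/List.in_map_iff; exists i.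
by split=> h u; rewrite h E.
Qed.

Lemma join_exists xs : pairwise_compatible xs -> exists j, is_join xs j.
Proof. by case: HB => [_ [_ [h _]]]; apply: h. Qed.

Lemma join_mull a xs j : pairwise_compatible xs -> is_join xs j ->
  is_join (List.map (mul a) xs) (a • j).
Proof. by case: HB => [_ [_ [_ [h _]]]] hc hj; case: (h xs j a hc hj). Qed.

Lemma join_mulr a xs j : pairwise_compatible xs -> is_join xs j ->
  is_join (List.map (mul^~ a) xs) (j • a).
Proof. by case: HB => [_ [_ [_ [h _]]]] hc hj; case: (h xs j a hc hj). Qed.

Lemma pairwise_compatible_idem xs : (forall x, List.In x xs -> idem x) -> pairwise_compatible xs.
Proof. by move=> h x y /h hx /h hy; exact: (idem_compatible HX). Qed.

Lemma pairwise_compatible_idem2 e f : idem e -> idem f -> pairwise_compatible [:: e; f].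
Proof. by move=> he hf; apply: pairwise_compatible_idem => x [<-|[<-|[]]]. Qed.

Lemma join_idem xs j : (forall x, List.In x xs -> idem x) -> is_join xs j -> idem j.
Proof.
move=> hxs hj; apply: (nle_idem HX idem1); apply: (join_least hj) => x /hxs.
exact: idem_nle1.
Qed.

Definition is_rcompl p n e := [/\ idem p, p • n = zero & is_join [:: p; n] e].

Lemma rcompl_idem p n e : idem n -> is_rcompl p n e -> idem e.
Proof. by move=> hn [hp _ hj]; apply: join_idem hj => x [<-|[<-|[]]]. Qed.

Lemma rcompl_nle p n e : is_rcompl p n e -> nle p e.
Proof. by case=> _ _ hj; apply: join_ub hj _; left. Qed.

Lemma compl_exists n : idem n -> exists c, is_rcompl c n one.
Proof.
move=> hn; case: HB => [_ [_ [_ [_ [_ [_ [_ [_ [_ hcompl]]]]]]]]].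
have [c [m [j [hc [[_ [mn [mc glb]]] [[_ [nj [cj lub]]] [m_bot j_top]]]]]]] := hcompl n hn.
exists c; split=> //.
  have hcn := idem_mul HX hc hn.
  apply: nlex0; apply: (nle_trans HX _ (m_bot _ idem0)); apply: glb => //.
  - by apply/(nle_idemE HX hcn hn); rewrite (idem_comm HX hc hn) mA hn.
  - by apply/(nle_idemE HX hcn hc); rewrite mA hc.
have [J hJ] := join_exists (pairwise_compatible_idem2 hc hn).
suff -> : one = J by [].
apply: (nle_antisym HX).
  apply: (nle_trans HX (j_top _ idem1)); apply: lub; first by apply: join_idem hJ => x [<-|[<-|[]]].
  - by apply: (join_ub hJ); right; left.
  - by apply: (join_ub hJ); left.
by apply: (join_least hJ) => x [<-|[<-|[]]]; exact: idem_nle1.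
Qed.

Lemma rcompl_exists n e : idem n -> idem e -> nle n e -> exists p, is_rcompl p n e.
Proof.
move=> hn he hne; have [c [hc hcn hj]] := compl_exists hn.
have := join_mull e (pairwise_compatible_idem2 hc hn) hj.
rewrite mulx1 /= -(nle_idemE HX hn he).1 // => hj'.
exists (e • c); split=> //; first exact: (idem_mul HX he hc).
by rewrite -mA hcn mulx0.
Qed.

(* Multiplying [n ∨ q = e] by [p] gives [p ∨ 0 = p q], so [p = p q]; symmetrically [q = q p]. *)
Lemma rcompl_uniq n e p q : idem n -> is_rcompl p n e -> is_rcompl q n e -> p = q.
Proof.
have absorb p' q' : idem n -> is_rcompl p' n e -> is_rcompl q' n e -> p' = p' • q'.
  move=> hn hrc [hq _ hjq]; have [hp hpn _] := hrc; have he := rcompl_idem hn hrc.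
  have hpe : p' • e = p'.
    by rewrite (idem_comm HX hp he) -(nle_idemE HX hp he).1 //; exact: rcompl_nle hrc.
  have := join_mull p' (pairwise_compatible_idem2 hq hn) hjq; rewrite /= hpn hpe.
  move/join_uniq; apply; apply: eq_join0 (join1 (p' • q')).
  - by move=> x [<-|[]]; right; left.
  - by move=> x [<-|[<-|[]]]; [right; left | left].
move=> hn hp hq; rewrite (absorb p q) // [in RHS](absorb q p) //.
by case: hp; case: hq => hq _ _ hp _ _; exact: (idem_comm HX hp hq).
Qed.

Lemma compatible_inv_mul u e f : idem e -> idem f -> compatible mul inv (inv u • e) (inv u • f).
Proof.
move=> he hf; rewrite /compatible !(invM HX) (idem_inv HX he) (idem_inv HX hf) (invK HX).
split; last by have := idem_conj HX u (idem_mul HX he hf); rewrite !mA.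
have -> : e • u • (inv u • f) = e • (u • inv u) • f by rewrite !mA.
by apply: (idem_mul HX) => //; apply: (idem_mul HX) => //; exact: (idem_ran HX).
Qed.

(* [u^-1 p1 u] is a complement of [n2] in [u^-1 u], hence equals [p2]. *)
Lemma rcompl_conj u n1 n2 p1 p2 :
  idem n1 -> idem n2 -> nle n2 (inv u • u) -> n1 • u = u • n2 ->
  is_rcompl p1 n1 (u • inv u) -> is_rcompl p2 n2 (inv u • u) -> u • p2 = p1 • u.
Proof.
move=> hn1 hn2 hn2u hnu hrc1 hrc2; have [hp1 hp1n1 hj1] := hrc1.
have n2E : n2 = inv u • u • n2 by apply/(nle_idemE HX hn2 (idem_dom HX u)).
have hrc : is_rcompl (inv u • p1 • u) n2 (inv u • u).
  split; first exact: (idem_conj HX).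
    by rewrite -mA -hnu mA -(mA _ p1) hp1n1 mulx0 mul0x.
  have hc : pairwise_compatible [:: inv u • p1; inv u • n1].
    by move=> x y [<-|[<-|[]]] [<-|[<-|[]]]; exact: compatible_inv_mul.
  have := join_mulr u hc (join_mull (inv u) (pairwise_compatible_idem2 hp1 hn1) hj1).
  by rewrite /= mA (inv_mul_inv HX) -(mA _ n1) hnu mA -n2E.
rewrite (rcompl_uniq hn2 hrc2 hrc) !mA.
by rewrite -(nle_idemE HX hp1 (idem_ran HX u)).1 //; exact: rcompl_nle hrc1.
Qed.

End BooleanInverseMonoid.

Section Groupoid.
Variables (S : finType) (mulS : S -> S -> S) (invS : S -> S).
Hypothesis HS : inverse_semigroup_axioms mulS invS.
Local Infix "•" := mulS (at level 40, left associativity).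
Local Notation idem := (idem mulS).
Local Notation nle := (nle mulS invS).
Local Notation d := (gdom mulS invS).
Local Notation r := (gran mulS invS).
Local Notation composable := (composable mulS invS).
Local Notation identities := (identities mulS).
Local Notation gset_mul := (gset_mul mulS invS).
Local Notation gset_inv := (gset_inv invS).
Local Notation LB := (is_local_bisection mulS invS).
Local Notation K := (KG mulS invS).
Local Notation Knle := (Defs.nle (@Kmul S mulS invS) (@Kinv S mulS invS)).
Local Notation Kidem := (Defs.idem (@Kmul S mulS invS)).
Local Notation Kcompatible := (compatible (@Kmul S mulS invS) (@Kinv S mulS invS)).
Local Notation Kjoin := (is_join (@Kmul S mulS invS) (@Kinv S mulS invS)).
Local Notation mA := (mulA HS).
Local Ltac arw := assoc_rw (mulA HS).

Lemma gset_mulP (A B : {set S}) z :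
  reflect (exists a b, [/\ a \in A, b \in B, composable a b & z = a • b]) (z \in gset_mul A B).
Proof.
apply: (iffP imset2P) => [[a b ha] | [a [b [ha hb hab ->]]]].
  by rewrite inE => /andP [hb hab] ->; exists a, b.
by exists a b => //; rewrite inE hb.
Qed.

Lemma gset_invP (A : {set S}) z : (z \in gset_inv A) = (invS z \in A).
Proof.
apply/imsetP/idP => [[a ha ->] | h]; first by rewrite (invK HS).
by exists (invS z); rewrite ?(invK HS).
Qed.

Lemma gset_invK (A : {set S}) : gset_inv (gset_inv A) = A.
Proof. by apply/setP => z; rewrite !gset_invP (invK HS). Qed.

Lemma identitiesP e : reflect (idem e) (e \in identities).
Proof. by rewrite inE; exact: eqP. Qed.

Lemma gdom_inv s : d (invS s) = r s.
Proof. by rewrite /gdom /gran (invK HS). Qed.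

Lemma gran_inv s : r (invS s) = d s.
Proof. by rewrite /gdom /gran (invK HS). Qed.

Lemma idem_gdom s : idem (d s).
Proof. exact: (idem_dom HS). Qed.

Lemma idem_gran s : idem (r s).
Proof. exact: (idem_ran HS). Qed.

Lemma gdom_idem e : idem e -> d e = e.
Proof. by move=> he; rewrite /gdom (idem_inv HS he) he. Qed.

Lemma gran_idem e : idem e -> r e = e.
Proof. by move=> he; rewrite /gran (idem_inv HS he) he. Qed.

Lemma gdom_mul s t : d s = r t -> d (s • t) = d t.
Proof. by rewrite /gdom /gran (invM HS) => h; arw h; arw (inv_mul_inv HS t). Qed.

Lemma gran_mul s t : d s = r t -> r (s • t) = r s.
Proof. by rewrite /gdom /gran (invM HS) => h; arw (esym h); arw (mul_inv_mul HS s). Qed.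

Lemma mul_gdom s : s • d s = s.
Proof. by rewrite /gdom mA (mul_inv_mul HS). Qed.

Lemma gran_mul_id s : r s • s = s.
Proof. exact: (mul_inv_mul HS). Qed.

(* [a = a (d b) = (a b^-1) b], and the identity [a b^-1] has domain [r b], so it is [r b]. *)
Lemma gset_mul_inv_identitiesP (A B : {set S}) :
  gset_mul A (gset_inv B) \subset identities <->
  {in A & B, forall a b, d a = d b -> a = b}.
Proof.
split=> [/subsetP sub a b ha hb hab | inj].
  have hc : d a = r (invS b) by rewrite gran_inv.
  have /sub /identitiesP hid : a • invS b \in gset_mul A (gset_inv B).
    by apply/gset_mulP; exists a, (invS b); rewrite gset_invP (invK HS) /composable hc.
  have e1 := gran_mul hc; have e2 := gdom_mul hc.
  rewrite (gran_idem hid) in e1; rewrite (gdom_idem hid) gdom_inv in e2.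
  have : a • invS b • b = a by rewrite -mA -/(d b) -hab mul_gdom.
  by rewrite e2 gran_mul_id.
apply/subsetP => _ /gset_mulP [a [b' [ha hb /eqP hc ->]]].
rewrite gset_invP in hb; rewrite -(invK HS b') gran_inv in hc.
by rewrite -(invK HS b') -(inj _ _ ha hb hc); apply/identitiesP; exact: idem_gran.
Qed.

Lemma gset_inv_mul_identitiesP (A B : {set S}) :
  gset_mul (gset_inv A) B \subset identities <->
  {in A & B, forall a b, r a = r b -> a = b}.
Proof.
rewrite -[B in gset_mul _ B](gset_invK B) gset_mul_inv_identitiesP.
split=> inj a b ha hb hab.
  by rewrite -(invK HS a) -(invK HS b) (inj (invS a) (invS b)) ?gset_invP ?(invK HS) ?gdom_inv.
by rewrite -(invK HS a) -(invK HS b) (inj (invS a) (invS b)) -?gset_invP ?gran_inv.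
Qed.

Lemma local_bisectionP (A : {set S}) :
  LB A <-> {in A &, injective d} /\ {in A &, injective r}.
Proof.
split=> [/andP [/gset_mul_inv_identitiesP dinj /gset_inv_mul_identitiesP rinj] // | [dinj rinj]].
by apply/andP; split; [apply/gset_mul_inv_identitiesP | apply/gset_inv_mul_identitiesP].
Qed.

Lemma local_bisection_subset (A B : {set S}) : A \subset B -> LB B -> LB A.
Proof.
move=> /subsetP sub /local_bisectionP [dinj rinj]; apply/local_bisectionP.
by split=> a b /sub ha /sub hb; [exact: dinj | exact: rinj].
Qed.

Lemma local_bisection_mul (A B : {set S}) : LB A -> LB B -> LB (gset_mul A B).
Proof.
move=> /local_bisectionP [dinjA rinjA] /local_bisectionP [dinjB rinjB].
apply/local_bisectionP; split=> _ _ /gset_mulP [a1 [b1 [ha1 hb1 /eqP h1 ->]]]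
                                     /gset_mulP [a2 [b2 [ha2 hb2 /eqP h2 ->]]].
  rewrite (gdom_mul h1) (gdom_mul h2) => /dinjB eb; rewrite -(eb hb1 hb2) in h2 *.
  by rewrite (dinjA a1 a2) // h1 h2.
rewrite (gran_mul h1) (gran_mul h2) => /rinjA ea; rewrite -(ea ha1 ha2) in h2 *.
by rewrite (rinjB b1 b2) // -h1 -h2.
Qed.

Lemma local_bisection_inv (A : {set S}) : LB A -> LB (gset_inv A).
Proof.
move=> /local_bisectionP [dinj rinj]; apply/local_bisectionP.
split=> a b; rewrite !gset_invP => ha hb h; rewrite -(invK HS a) -(invK HS b); congr invS.
  by apply: rinj; rewrite // -!gdom_inv !(invK HS).
by apply: dinj; rewrite // -!gran_inv !(invK HS).
Qed.

Lemma local_bisection_identities : LB identities.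
Proof.
apply/local_bisectionP; split=> a b /identitiesP ha /identitiesP hb.
  by rewrite (gdom_idem ha) (gdom_idem hb).
by rewrite (gran_idem ha) (gran_idem hb).
Qed.

Lemma downsetP a y : reflect (nle y a) (y \in downset mulS invS a).
Proof. by rewrite inE; exact: eqP. Qed.

Lemma nle_gran y a : nle y a -> y = r y • a.
Proof.
move=> /(nle_leftP HS) [f hf ->]; rewrite /gran (invM HS) (idem_inv HS hf).
by arw (idem_comm HS (idem_ran HS a) hf); arw hf; arw (mul_inv_mul HS a).
Qed.

Lemma local_bisection_downset a : LB (downset mulS invS a).
Proof.
apply/local_bisectionP; split=> y1 y2 /downsetP h1 /downsetP h2 h.
  by rewrite h1 h2; congr (a • _).
by rewrite (nle_gran h1) (nle_gran h2) h.
Qed.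

Lemma local_bisection_set1 x : LB [set x].
Proof. by apply/local_bisectionP; split=> a b /set1P -> /set1P ->. Qed.

Definition Kset (A : {set S}) : K := insubd (Kzero mulS invS) A.

Lemma KsetK (A : {set S}) : LB A -> val (Kset A) = A.
Proof. exact: insubdK. Qed.

Lemma val_Kmul (A B : K) : val (Kmul A B) = gset_mul (val A) (val B).
Proof. by rewrite /Kmul KsetK //; apply: local_bisection_mul; exact: valP. Qed.

Lemma val_Kinv (A : K) : val (Kinv A) = gset_inv (val A).
Proof. by rewrite /Kinv KsetK //; apply: local_bisection_inv; exact: valP. Qed.

Lemma val_Kone : val (Kone mulS invS) = identities.
Proof. by rewrite /Kone KsetK //; exact: local_bisection_identities. Qed.

Lemma val_beta a : val (beta mulS invS a) = downset mulS invS a.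
Proof. by rewrite /beta KsetK //; exact: local_bisection_downset. Qed.

Lemma val_Kset1 x : val (Kset [set x]) = [set x].
Proof. by rewrite KsetK //; exact: local_bisection_set1. Qed.

Lemma gset_mul_inv_l (A : {set S}) : LB A -> gset_mul (gset_inv A) A = d @: A.
Proof.
move=> /local_bisectionP [_ rinj]; apply/setP => z; apply/gset_mulP/imsetP.
  case=> _ [b [/imsetP [a ha ->] hb /eqP hc ->]]; rewrite gdom_inv in hc.
  by exists b => //; rewrite -(rinj _ _ ha hb hc).
case=> a ha ->; exists (invS a), a; split => //; first exact: imset_f.
by rewrite /composable gdom_inv.
Qed.

Lemma KnleP (A B : K) : Knle A B <-> val A \subset val B.
Proof.
have hA := valP A; have hB := valP B.
have hdA : forall b z, z \in d @: val A -> composable b z -> b • z = b.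
  move=> b _ /imsetP [a _ ->]; rewrite /composable (gran_idem (idem_gdom _)) => /eqP <-.
  exact: mul_gdom.
rewrite /Defs.nle; split=> [/(congr1 val) | /subsetP sub].
  rewrite !val_Kmul val_Kinv gset_mul_inv_l // => ->.
  by apply/subsetP => _ /gset_mulP [b [z [hb hz hc ->]]]; rewrite hdA.
apply: val_inj; rewrite !val_Kmul val_Kinv gset_mul_inv_l //; apply/setP => z.
apply/idP/gset_mulP => [hz | [b [z' [hb hz' hc ->]]]].
  exists z, (d z); split; rewrite ?mul_gdom ?sub //; first exact: imset_f.
  by rewrite /composable (gran_idem (idem_gdom _)).
rewrite hdA //; case/imsetP: hz' hc => a ha -> /eqP; rewrite (gran_idem (idem_gdom _)).
by case/local_bisectionP: hB => dinj _ /(dinj _ _ hb (sub _ ha)) ->.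
Qed.

Lemma gset_mul_identities (A : {set S}) : A \subset identities -> gset_mul A A = A.
Proof.
move=> /subsetP sub; apply/setP => z; apply/gset_mulP/idP.
  case=> a [b [/[dup] ha /sub /identitiesP ea /sub /identitiesP eb /eqP hc ->]].
  by rewrite (gdom_idem ea) (gran_idem eb) in hc; rewrite -hc ea.
move=> hz; have /sub /identitiesP ez := hz; exists z, z.
by rewrite /composable (gdom_idem ez) (gran_idem ez) ez.
Qed.

Lemma KidemP (A : K) : Kidem A <-> val A \subset identities.
Proof.
rewrite /Defs.idem; split=> [/(congr1 val) | sub]; last first.
  by apply: val_inj; rewrite val_Kmul gset_mul_identities.
rewrite val_Kmul => AA; apply/subsetP => x hx.
have /local_bisectionP [dinj rinj] := valP A.
move: (hx); rewrite -AA => /gset_mulP [a [b [ha hb /eqP hc ex]]].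
have ea : x = a by apply: rinj => //; rewrite ex (gran_mul hc).
have eb : x = b by apply: dinj => //; rewrite ex (gdom_mul hc).
by apply/identitiesP; rewrite /idem {3}ex -ea -eb.
Qed.

Lemma KcompatibleP (A B : K) : Kcompatible A B <-> LB (val A :|: val B).
Proof.
rewrite /compatible !KidemP !val_Kmul !val_Kinv.
rewrite gset_inv_mul_identitiesP gset_mul_inv_identitiesP.
have /local_bisectionP [dinjA rinjA] := valP A.
have /local_bisectionP [dinjB rinjB] := valP B.
rewrite local_bisectionP; split=> [[rinjAB dinjAB] | [dinj rinj]].
  split=> a b /setUP [ha|ha] /setUP [hb|hb] h; auto; by [symmetry; auto].
by split=> a b ha hb h; [apply: rinj | apply: dinj]; rewrite // inE ?ha ?hb ?orbT.
Qed.

Lemma Kjoin_setU (A B C : K) : val C = val A :|: val B -> Kjoin [:: A; B] C.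
Proof.
move=> hC; split=> [_ [<-|[<-|[]]] | U hU]; apply/KnleP; rewrite hC ?subsetUl ?subsetUr //.
by rewrite subUset; apply/andP; split; apply/KnleP; apply: hU; [left | right; left].
Qed.

Lemma Kjoin_compatible (A B C : K) : Kcompatible A B -> Kjoin [:: A; B] C ->
  val C = val A :|: val B.
Proof.
move=> /KcompatibleP hAB [ub least].
apply/eqP; rewrite eqEsubset; apply/andP; split.
  rewrite -(KsetK hAB); apply/KnleP; apply: least => _ [<-|[<-|[]]];
  by apply/KnleP; rewrite KsetK // ?subsetUl ?subsetUr.
by rewrite subUset; apply/andP; split; apply/KnleP; apply: ub; [left | right; left].
Qed.

Lemma downset_refl a : a \in downset mulS invS a.
Proof. exact/downsetP/(nle_refl HS). Qed.

Lemma downset_trans a b c :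
  b \in downset mulS invS a -> c \in downset mulS invS b -> c \in downset mulS invS a.
Proof. by move=> /downsetP hba /downsetP hcb; apply/downsetP; exact: (nle_trans HS hcb hba). Qed.

Lemma downset_antisym a b :
  b \in downset mulS invS a -> a \in downset mulS invS b -> a = b.
Proof. by move=> /downsetP hba /downsetP hab; exact: (nle_antisym HS hab hba). Qed.

Lemma downset_idem e f : idem e -> f \in downset mulS invS e -> idem f.
Proof. by move=> he /downsetP; exact: (nle_idem HS he). Qed.

Lemma downset_idemE e f : idem e -> idem f -> (f \in downset mulS invS e) = (f == e • f).
Proof. by move=> he hf; apply/downsetP/eqP; rewrite (nle_idemE HS hf he). Qed.
End Groupoid.

Lemma inverse_monoid_semigroup (X : Type) (mul : X -> X -> X) (inv : X -> X) (one : X) :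
  inverse_monoid mul inv one -> inverse_semigroup_axioms mul inv.
Proof. by case. Qed.

Section Extension.
Variables (S : finType) (mulS : S -> S -> S) (oneS : S) (invS : S -> S).
Hypothesis HS : inverse_monoid mulS invS oneS.
Variables (T : Type) (mulT : T -> T -> T) (oneT zeroT : T) (invT : T -> T).
Hypothesis HT : boolean_inverse_monoid mulT invT oneT zeroT.
Variable alpha : S -> T.
Hypothesis Halpha : monoid_hom mulS oneS mulT oneT alpha.

Local Infix "•" := mulS (at level 40, left associativity).
Local Infix "⋆" := mulT (at level 40, left associativity).
Local Notation HSi := (inverse_monoid_semigroup HS).
Local Notation HTi := (bim_inverse_semigroup HT).
Local Notation mS := (mulA HSi).
Local Notation mT := (mulA HTi).
Local Notation idemS := (Defs.idem mulS).
Local Notation idemT := (Defs.idem mulT).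
Local Notation nleS := (Defs.nle mulS invS).
Local Notation nleT := (Defs.nle mulT invT).
Local Notation joinT := (is_join mulT invT).
Local Notation compatibleT := (pairwise_compatible mulT invT).
Local Notation rcomplT := (is_rcompl mulT invT zeroT).
Local Notation d := (gdom mulS invS).
Local Notation r := (gran mulS invS).
Local Notation downset := (downset mulS invS).
Local Notation K := (KG mulS invS).
Local Notation Kset := (Kset mulS invS).
Local Notation Kcompatible := (compatible (@Kmul S mulS invS) (@Kinv S mulS invS)).
Local Notation Kjoin := (is_join (@Kmul S mulS invS) (@Kinv S mulS invS)).
Local Notation Kmorphism := (bim_morphism (@Kmul S mulS invS) (Kone mulS invS) (Kzero mulS invS)
  (@Kinv S mulS invS) mulT oneT zeroT invT).

Lemma alphaM a b : alpha (a • b) = alpha a ⋆ alpha b.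
Proof. by case: Halpha. Qed.

Lemma alpha1 : alpha oneS = oneT.
Proof. by case: Halpha. Qed.

Lemma alphaV s : alpha (invS s) = invT (alpha s).
Proof. by apply: (inv_uniq HTi); rewrite -!alphaM ?(mul_inv_mul HSi) ?(inv_mul_inv HSi). Qed.

Lemma alpha_idem e : idemS e -> idemT (alpha e).
Proof. by rewrite /idem -alphaM => ->. Qed.

Lemma alpha_nle a b : nleS a b -> nleT (alpha a) (alpha b).
Proof. by rewrite /nle => {1}->; rewrite !alphaM alphaV. Qed.

Lemma alpha_gdom y : alpha (d y) = invT (alpha y) ⋆ alpha y.
Proof. by rewrite alphaM alphaV. Qed.

Lemma alpha_gran y : alpha (r y) = alpha y ⋆ invT (alpha y).
Proof. by rewrite alphaM alphaV. Qed.

Definition some_join (xs : list T) : T := epsilon (inhabits zeroT) (joinT xs).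

Lemma some_joinP xs : compatibleT xs -> joinT xs (some_join xs).
Proof. by move=> /(join_exists HT) ex; exact: epsilon_spec ex. Qed.

Definition below e := downset e :\ e.

Lemma below_idem e f : idemS e -> f \in below e -> idemS f.
Proof. by move=> he /setD1P [_]; exact: (downset_idem HSi). Qed.

Lemma downset_sub_below e f : f \in below e -> downset f \subset below e.
Proof.
case/setD1P => fe hf; apply/subsetP => g hg; rewrite in_setD1 (downset_trans HSi hf hg) andbT.
by apply: contra fe => /eqP ge; rewrite ge in hg; rewrite (downset_antisym HSi hf hg).
Qed.

Lemma downset_proper_below e f : f \in below e -> downset f \proper downset e.
Proof.
move/downset_sub_below/sub_proper_trans; apply; exact/properD1/(downset_refl HSi).
Qed.

Definition nu e := some_join (List.map alpha (enum (below e))).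

Definition pi e := epsilon (inhabits zeroT) (fun p => rcomplT p (nu e) (alpha e)).

Lemma alpha_below_compatible e : idemS e -> compatibleT (List.map alpha (enum (below e))).
Proof.
move=> he; apply: (pairwise_compatible_idem HT) => _ /in_map_enumP [f hf ->].
exact/alpha_idem/(below_idem he hf).
Qed.

Lemma nuP e : idemS e -> joinT (List.map alpha (enum (below e))) (nu e).
Proof. by move=> he; apply/some_joinP/alpha_below_compatible. Qed.

Lemma nu_idem e : idemS e -> idemT (nu e).
Proof.
move=> he; apply: (join_idem HT _ (nuP he)) => _ /in_map_enumP [f hf ->].
exact/alpha_idem/(below_idem he hf).
Qed.

Lemma nu_nle e : idemS e -> nleT (nu e) (alpha e).
Proof.
move=> he; apply: (join_least (nuP he)) => _ /in_map_enumP [f /setD1P [_ /downsetP hf] ->].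
exact: alpha_nle.
Qed.

Lemma piP e : idemS e -> rcomplT (pi e) (nu e) (alpha e).
Proof.
move=> he; apply: (epsilon_spec (inhabits zeroT) (fun p => rcomplT p (nu e) (alpha e))).
exact: (rcompl_exists HT (nu_idem he) (alpha_idem he) (nu_nle he)).
Qed.

Lemma pi_idem e : idemS e -> idemT (pi e).
Proof. by move=> he; case: (piP he). Qed.

Lemma alpha_pi e : idemS e -> alpha e ⋆ pi e = pi e.
Proof.
move=> he; symmetry; apply/(nle_idemE HTi (pi_idem he) (alpha_idem he)).
exact: (rcompl_nle (piP he)).
Qed.

Lemma pi_alpha e : idemS e -> pi e ⋆ alpha e = pi e.
Proof. by move=> he; rewrite (idem_comm HTi (pi_idem he) (alpha_idem he)) alpha_pi. Qed.

(* If [e f <> e] then [alpha (e f) <= nu e], which [pi e] annihilates. *)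
Lemma pi_orth e f : idemS e -> idemS f -> e != f -> pi e ⋆ pi f = zeroT.
Proof.
wlog efe : e f / e • f != e => [orth he hf ef|he hf _].
  have [efe|efe] := eqVneq (e • f) e; last exact: orth efe he hf ef.
  rewrite (idem_comm HTi (pi_idem he) (pi_idem hf)) orth //; last by rewrite eq_sym.
  by rewrite (idem_comm HSi hf he) efe.
have hef : e • f \in below e.
  by rewrite in_setD1 efe (downset_idemE HSi he (idem_mul HSi he hf)) mS he eqxx.
have : nleT (alpha (e • f)) (nu e).
  by apply: (join_ub (nuP he)); apply/in_map_enumP; exists (e • f).
move/(nle_idemE HTi (alpha_idem (idem_mul HSi he hf)) (nu_idem he)) => ef_nu.
have [_ pi_nu _] := piP he.
rewrite -(pi_alpha he) -(alpha_pi hf) -mT (mT (alpha e)) -alphaM ef_nu.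
by rewrite !mT pi_nu !(mul0x HT).
Qed.

Lemma below_conj y g : g \in below (r y) ->
  invS y • g • y \in below (d y) /\ y • (invS y • g • y) = g • y.
Proof.
case/setD1P => gry /downsetP g_le; have hg := nle_idem HSi (idem_ran HSi y) g_le.
have gE : y • invS y • g = g by rewrite -(nle_idemE HSi hg (idem_ran HSi y)).1.
have yc : y • (invS y • g • y) = g • y by rewrite !mS gE.
split=> //; rewrite in_setD1 (downset_idemE HSi (idem_gdom HSi y) (idem_conj HSi y hg)).
rewrite /gdom !mS (inv_mul_inv HSi) eqxx andbT.
apply: contra gry => /eqP c; apply/eqP.
have : y • (invS y • g • y) • invS y = y • (invS y • y) • invS y by rewrite c.
by rewrite yc !mS (mul_inv_mul HSi) -mS (idem_comm HSi hg (idem_ran HSi y)) gE.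
Qed.

Lemma below_conjV y f : f \in below (d y) ->
  y • f • invS y \in below (r y) /\ y • f • invS y • y = y • f.
Proof.
move=> hf; have := below_conj (y := invS y) (g := f).
rewrite (gran_inv HSi) (gdom_inv HSi) (invK HSi) => /(_ hf) [hg _]; split=> //.
have [_ /downsetP f_le] := setD1P hf; have hf' := nle_idem HSi (idem_dom HSi y) f_le.
have fE : invS y • y • f = f by rewrite -(nle_idemE HSi hf' (idem_dom HSi y)).1.
by rewrite -!mS (idem_comm HSi hf' (idem_dom HSi y)) fE.
Qed.

Lemma nu_conj y : nu (r y) ⋆ alpha y = alpha y ⋆ nu (d y).
Proof.
have hry := idem_gran HSi y; have hdy := idem_gdom HSi y.
have hr := join_mulr HT (alpha y) (alpha_below_compatible hry) (nuP hry).
have hd := join_mull HT (alpha y) (alpha_below_compatible hdy) (nuP hdy).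
rewrite List.map_map in hr; rewrite List.map_map in hd.
apply: (join_uniq HT hr); apply: (eq_join HT _ hd) => x; rewrite !in_map_enumP.
split=> -[f hf ->].
  by have [hg e] := below_conjV hf; exists (y • f • invS y); rewrite // -!alphaM e.
by have [hg e] := below_conj hf; exists (invS y • f • y); rewrite // -!alphaM e.
Qed.

Lemma pi_conj y : alpha y ⋆ pi (d y) = pi (r y) ⋆ alpha y.
Proof.
have := piP (idem_gdom HSi y); have := piP (idem_gran HSi y).
rewrite alpha_gdom alpha_gran => hr hd.
apply: (rcompl_conj HT (nu_idem (idem_gran HSi y)) (nu_idem (idem_gdom HSi y)) _ (nu_conj y) hr hd).
by rewrite -alpha_gdom; exact/nu_nle/(idem_gdom HSi).
Qed.

Definition gamma_set1 x := alpha x ⋆ pi (d x).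

Lemma gamma_set1_gran x : gamma_set1 x = pi (r x) ⋆ alpha x.
Proof. exact: pi_conj. Qed.

Lemma gamma_set1_mul x y :
  gamma_set1 x ⋆ gamma_set1 y = if composable mulS invS x y then gamma_set1 (x • y) else zeroT.
Proof.
rewrite (gamma_set1_gran y) /gamma_set1 -(mT _ (pi (d x))) (mT (pi (d x))) /composable.
case: eqP => [dxry | /eqP dxry]; last first.
  by rewrite (pi_orth (idem_gdom HSi x) (idem_gran HSi y) dxry) (mul0x HT) (mulx0 HT).
rewrite (gdom_mul HSi dxry) dxry (pi_idem (idem_gran HSi y)) -pi_conj mT -alphaM //.
Qed.

Lemma gamma_set1V x : invT (gamma_set1 x) = pi (d x) ⋆ alpha (invS x).
Proof. by rewrite /gamma_set1 (invM HTi) (idem_inv HTi (pi_idem (idem_gdom HSi x))) alphaV. Qed.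

Lemma gamma_set1V_gran x : invT (gamma_set1 x) = alpha (invS x) ⋆ pi (r x).
Proof. by rewrite gamma_set1_gran (invM HTi) (idem_inv HTi (pi_idem (idem_gran HSi x))) alphaV. Qed.

Lemma gamma_set1_compatible (A : {set S}) : is_local_bisection mulS invS A ->
  {in A &, forall x y, compatible mulT invT (gamma_set1 x) (gamma_set1 y)}.
Proof.
move=> /(local_bisectionP HSi) [dinj rinj] x y hx hy.
have [<-|xy] := eqVneq x y; first by split; [exact: (idem_dom HTi) | exact: (idem_ran HTi)].
have rxy : r x != r y by apply: contra xy => /eqP /(rinj _ _ hx hy) ->.
have dxy : d x != d y by apply: contra xy => /eqP /(dinj _ _ hx hy) ->.
split.
  rewrite gamma_set1V_gran (gamma_set1_gran y) mT -(mT (alpha (invS x))).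
  rewrite (pi_orth (idem_gran HSi x) (idem_gran HSi y) rxy) (mulx0 HT) (mul0x HT).
  exact: (idem0 HT).
rewrite gamma_set1V /gamma_set1 mT -(mT (alpha x)).
rewrite (pi_orth (idem_gdom HSi x) (idem_gdom HSi y) dxy) (mulx0 HT) (mul0x HT).
exact: (idem0 HT).
Qed.

Definition gamma (A : K) : T := some_join (List.map gamma_set1 (enum (val A))).

Lemma gamma_set1_pairwise_compatible (A : {set S}) : is_local_bisection mulS invS A ->
  compatibleT (List.map gamma_set1 (enum A)).
Proof.
move=> hA _ _ /in_map_enumP [x hx ->] /in_map_enumP [y hy ->].
exact: gamma_set1_compatible hA x y hx hy.
Qed.

Lemma gammaP (A : K) : joinT (List.map gamma_set1 (enum (val A))) (gamma A).
Proof. exact/some_joinP/gamma_set1_pairwise_compatible/valP. Qed.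

(* Strong induction on [#|downset e|]: [alpha e = pi e ∨ nu e], and [nu e] is the join of the
   [alpha f = ∨_{g <= f} pi g] over [f < e]. *)
Lemma alpha_join_pi e : idemS e -> joinT (List.map pi (enum (downset e))) (alpha e).
Proof.
move: {2}#|downset e| (leqnn #|downset e|) => n; elim: n e => [|n IH] e hn he.
  by move: hn; rewrite leqn0 => /eqP /card0_eq /(_ e); rewrite (downset_refl HSi).
have IHb f : List.In f (enum (below e)) -> joinT (List.map pi (enum (downset f))) (alpha f).
  move=> /In_mem; rewrite mem_enum => hf; apply: IH (below_idem he hf).
  by rewrite -ltnS; apply: leq_trans hn; exact/proper_card/downset_proper_below.
have [_ _ hj] := piP he.
have := (join_cons HT (pi e) (alpha e) ((join_concat HT (nu e) IHb).1 (nuP he))).1 hj.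
apply: (eq_join HT) => x; rewrite /= in_concat_map_enumP in_map_enumP.
split=> [[<- | [f /setD1P [_ hf] /in_map_enumP [g hg ->]]] | [g hg ->]].
- by exists e; rewrite ?(downset_refl HSi).
- by exists g; rewrite // (downset_trans HSi hf hg).
have [<-|ge] := eqVneq g e; [left | right] => //.
by exists g; [exact/setD1P | apply/in_map_enumP; exists g; rewrite ?(downset_refl HSi)].
Qed.

Lemma gdom_mul_downset a f : f \in downset (d a) -> d (a • f) = f.
Proof.
move=> hf; have hfi := downset_idem HSi (idem_gdom HSi a) hf.
have fE : invS a • a • f = f.
  by apply/esym/eqP; rewrite -(downset_idemE HSi (idem_gdom HSi a) hfi).
by rewrite /gdom (invM HSi) (idem_inv HSi hfi); assoc_rw (mulA HSi) fE; exact: hfi.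
Qed.

Lemma gamma_beta a : gamma (beta mulS invS a) = alpha a.
Proof.
have hda := idem_gdom HSi a.
have pc : compatibleT (List.map pi (enum (downset (d a)))).
  apply: (pairwise_compatible_idem HT) => _ /in_map_enumP [f hf ->].
  exact/pi_idem/(downset_idem HSi hda hf).
have := join_mull HT (alpha a) pc (alpha_join_pi hda).
rewrite -alphaM (mul_gdom HSi) List.map_map => ha.
apply: (join_uniq HT (gammaP _)); rewrite (val_beta HSi).
apply: (eq_join HT _ ha) => x; rewrite !in_map_enumP; split=> -[y hy ->].
  have hyi := downset_idem HSi hda hy.
  exists (a • y); first by apply/downsetP/(nleP HSi); exists y.
  by rewrite /gamma_set1 gdom_mul_downset // alphaM -mT alpha_pi.
have /downsetP y_le := hy; exists (d y).
  rewrite (downset_idemE HSi hda (idem_gdom HSi y)); apply/eqP; exact: (nle_dom HSi y_le).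
by rewrite /gamma_set1 {1}y_le alphaM -mT (alpha_pi (idem_gdom HSi y)).
Qed.

Lemma gamma0 : gamma (Kzero mulS invS) = zeroT.
Proof. by apply: (join_uniq HT (gammaP _)); rewrite /= enum_set0; exact: (join_nil HT). Qed.

Lemma Kone_beta : Kone mulS invS = beta mulS invS oneS.
Proof.
have one_idem : idemS oneS by case: HS => _ /(_ oneS) [].
apply: val_inj; rewrite (val_Kone HSi) (val_beta HSi); apply/setP => y.
apply/identitiesP/downsetP => [hy | /(nle_idem HSi one_idem) //].
by apply/(nle_idemE HSi hy one_idem); case: HS => _ /(_ y) [->].
Qed.

Lemma gamma1 : gamma (Kone mulS invS) = oneT.
Proof. by rewrite Kone_beta gamma_beta alpha1. Qed.

Lemma gammaM (A B : K) : gamma (Kmul A B) = gamma A ⋆ gamma B.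
Proof.
have hAB := join_mulr HT (gamma B) (gamma_set1_pairwise_compatible (valP A)) (gammaP A).
have hrow x : List.In x (enum (val A)) ->
    joinT [seq gamma_set1 x ⋆ gamma_set1 y | y <- enum (val B)] (gamma_set1 x ⋆ gamma B).
  have hB := gamma_set1_pairwise_compatible (valP B).
  by move=> _; have := join_mull HT (gamma_set1 x) hB (gammaP B); rewrite List.map_map.
rewrite List.map_map in hAB; move/(join_concat HT _ hrow): hAB => hAB.
symmetry; apply: (join_uniq HT hAB); have := gammaP (Kmul A B); rewrite (val_Kmul HSi).
apply: (eq_join0 HT).
  move=> _ /in_map_enumP [_ /gset_mulP [x [y [hx hy hxy ->]]] ->]; right.
  apply/in_concat_map_enumP; exists x => //; apply/in_map_enumP; exists y => //.
  by rewrite gamma_set1_mul hxy.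
move=> _ /in_concat_map_enumP [x hx /in_map_enumP [y hy ->]].
rewrite gamma_set1_mul; case: ifP => hxy; [right | by left].
by apply/in_map_enumP; exists (x • y) => //; apply/gset_mulP; exists x, y.
Qed.

Lemma gamma_join (A B C : K) :
  Kcompatible A B -> Kjoin [:: A; B] C -> joinT [:: gamma A; gamma B] (gamma C).
Proof.
move=> hAB hC; have := gammaP C; rewrite (Kjoin_compatible HSi hAB hC) => hU.
have hX X : List.In X [:: A; B] -> joinT (List.map gamma_set1 (enum (val X))) (gamma X).
  by move=> _; exact: gammaP.
apply/(join_concat HT (gamma C) hX); apply: (eq_join HT _ hU) => x.
rewrite in_map_enumP /= !List.in_app_iff !in_map_enumP.
split=> [[z /setUP [hz|hz] ->] | [[z hz ->] | [[z hz ->] | []]]].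
- by left; exists z.
- by right; left; exists z.
- by exists z => //; apply/setUP; left.
- by exists z => //; apply/setUP; right.
Qed.

Lemma gamma_morphism : Kmorphism gamma.
Proof.
by split; [split; [exact: gammaM | exact: gamma1] | split; [exact: gamma0 | exact: gamma_join]].
Qed.

Section Uniqueness.
Variable g : K -> T.
Hypothesis Hg : Kmorphism g.
Hypothesis g_beta : forall a, g (beta mulS invS a) = alpha a.

Lemma morphM A B : g (Kmul A B) = g A ⋆ g B.
Proof. by case: Hg => [[]]. Qed.

Lemma morph0 : g (Kzero mulS invS) = zeroT.
Proof. by case: Hg => _ []. Qed.

Lemma morph_join (A B C : K) :
  Kcompatible A B -> Kjoin [:: A; B] C -> joinT [:: g A; g B] (g C).
Proof. by case: Hg => _ [_]; apply. Qed.

Lemma morph_bigcup (s : seq S) (F : S -> K) (U : K) :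
  val U = \bigcup_(x <- s) val (F x) -> joinT [seq g (F x) | x <- s] (g U).
Proof.
elim: s U => [|x s IH] U; rewrite ?big_nil ?big_cons => hU.
  have -> : U = Kzero mulS invS by exact: val_inj.
  by rewrite morph0; exact: (join_nil HT).
have hLB : is_local_bisection mulS invS (\bigcup_(y <- s) val (F y)).
  by apply: (local_bisection_subset HSi _ (valP U)); rewrite hU subsetUr.
have hV := KsetK hLB; rewrite -hV in hU.
have hc : Kcompatible (F x) (Kset (\bigcup_(y <- s) val (F y))).
  by apply/(KcompatibleP HSi); rewrite -hU; exact: valP.
apply/(join_cons HT (g (F x)) (g U) (IH _ hV)).
exact: morph_join hc (Kjoin_setU HSi hU).
Qed.

Lemma morph_set1_idem e : idemS e -> g (Kset [set e]) = pi e.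
Proof.
move=> he; have hB : is_local_bisection mulS invS (below e).
  exact: (local_bisection_subset HSi (subD1set _ _) (local_bisection_downset HSi e)).
have gB : g (Kset (below e)) = nu e.
  apply: (join_uniq HT _ (nuP he)); rewrite -(List.map_ext _ _ g_beta).
  apply: morph_bigcup; rewrite KsetK // big_enum; apply/setP => z.
  apply/idP/bigcupP => [hz | [f hf]].
    by exists z; rewrite // (val_beta HSi) (downset_refl HSi).
  by rewrite (val_beta HSi); apply/subsetP/downset_sub_below.
have hbeta : val (beta mulS invS e) = val (Kset [set e]) :|: val (Kset (below e)).
  by rewrite (val_beta HSi) (val_Kset1 HSi) (KsetK hB) (setD1K (downset_refl HSi e)).
have hc : Kcompatible (Kset [set e]) (Kset (below e)).
  by apply/(KcompatibleP HSi); rewrite -hbeta; exact: valP.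
have := morph_join hc (Kjoin_setU HSi hbeta); rewrite g_beta gB => hj.
apply: (rcompl_uniq HT (nu_idem he) _ (piP he)); split=> //.
  rewrite /idem -morphM; congr g; apply/(KidemP HSi); rewrite (val_Kset1 HSi).
  by apply/subsetP => _ /set1P ->; exact/identitiesP.
rewrite -gB -morphM -morph0; congr g; apply: val_inj.
rewrite (val_Kmul HSi) (val_Kset1 HSi) KsetK //.
apply/setP => z; rewrite inE; apply/negbTE/negP => /gset_mulP [_ [f [/set1P -> hf /eqP ef _]]].
have hfi := below_idem he hf; case/setD1P: hf => /eqP [].
by rewrite -(gdom_idem HSi he) ef (gran_idem HSi hfi).
Qed.

Lemma morph_set1 x : g (Kset [set x]) = gamma_set1 x.
Proof.
have -> : Kset [set x] = Kmul (beta mulS invS x) (Kset [set d x]).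
  apply: val_inj; rewrite (val_Kmul HSi) (val_beta HSi) !(val_Kset1 HSi); apply/setP => z.
  rewrite inE; apply/eqP/gset_mulP => [-> | [y [_ [/downsetP y_le /set1P -> /eqP hc ->]]]].
    exists x, (d x); rewrite (mul_gdom HSi) set11; split=> //; first exact: (downset_refl HSi).
    by rewrite /composable (gran_idem HSi (idem_gdom HSi x)).
  rewrite (gran_idem HSi (idem_gdom HSi x)) in hc.
  by rewrite {1}y_le -/(gdom mulS invS y) hc !(mul_gdom HSi).
by rewrite morphM g_beta (morph_set1_idem (idem_gdom HSi x)).
Qed.

Lemma morph_gamma A : g A = gamma A.
Proof.
apply: (join_uniq HT _ (gammaP A)); rewrite -(List.map_ext _ _ morph_set1).
apply: morph_bigcup; rewrite big_enum; apply/setP => z.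
apply/idP/bigcupP => [hz | [x hx]]; first by exists z; rewrite // (val_Kset1 HSi) set11.
by rewrite (val_Kset1 HSi) => /set1P ->.
Qed.

End Uniqueness.
End Extension.

Theorem mainTheorem3
  (S : finType) (mulS : S -> S -> S) (oneS : S) (invS : S -> S)
  (HS : inverse_monoid mulS invS oneS)
  (T : Type) (mulT : T -> T -> T) (oneT zeroT : T) (invT : T -> T)
  (HT : boolean_inverse_monoid mulT invT oneT zeroT)
  (alpha : S -> T) (Halpha : monoid_hom mulS oneS mulT oneT alpha) :
  exists gamma : KG mulS invS -> T,
    (bim_morphism (@Kmul S mulS invS) (Kone mulS invS) (Kzero mulS invS)
       (@Kinv S mulS invS) mulT oneT zeroT invT gamma /\
     forall a, gamma (beta mulS invS a) = alpha a) /\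
    (forall gamma' : KG mulS invS -> T,
       bim_morphism (@Kmul S mulS invS) (Kone mulS invS) (Kzero mulS invS)
         (@Kinv S mulS invS) mulT oneT zeroT invT gamma' ->
       (forall a, gamma' (beta mulS invS a) = alpha a) ->
       forall A, gamma' A = gamma A).
Proof.
exists (gamma mulT zeroT invT alpha); split.
  by split; [exact: (gamma_morphism HS HT Halpha) | exact: (gamma_beta HS HT Halpha)].
by move=> gamma' Hgamma' gamma'_beta A; exact: (morph_gamma HS HT Halpha Hgamma' gamma'_beta).
Qed.
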